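(* Let $S$ be a semigroup with a maximal $\mathcal{J}$-class $J$ (with respect to $\le_{\mathcal{J}}$) such that $\langle J\rangle\neq S$. Then $\sigma_s(S)=2$.
   Context: For a semigroup $S$, $S^1$ is $S$ with an identity adjoined if $S$ has none, and $S$ otherwise. $x\mathcal{J}y$ iff $S^1xS^1=S^1yS^1$; the classes are $\mathcal{J}$-classes, ordered by $J_x\le_{\mathcal{J}}J_y$ iff $S^1xS^1\subseteq S^1yS^1$. $\langle J\rangle$ is the subsemigroup generated by $J$. $\sigma_s(S)$ is the least positive integer $n$ such that $S$ is the union of $n$ proper subsemigroups, or $\infty$ if none exists. *)

From Stdlib Require Import Arith.

Section Semigroup.
Variables (T : Type) (op : T -> T -> T).

(* y \in S^1 x S^1 *)
Definition in_principal_ideal (x y : T) : Prop :=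
  y = x \/ (exists a, y = op a x) \/ (exists b, y = op x b)
  \/ (exists a b, y = op (op a x) b).

Definition J_le (x y : T) : Prop :=
  forall z, in_principal_ideal x z -> in_principal_ideal y z.

Definition J_rel (x y : T) : Prop := J_le x y /\ J_le y x.

Definition maximal_J_class (J : T -> Prop) : Prop :=
  exists x, (forall z, J z <-> J_rel z x) /\ (forall y, J_le x y -> J_le y x).

Inductive generated (A : T -> Prop) : T -> Prop :=
| gen_base : forall x, A x -> generated A x
| gen_op : forall x y, generated A x -> generated A y -> generated A (op x y).

Definition is_subsemigroup (U : T -> Prop) : Prop :=
  (exists x, U x) /\ (forall x y, U x -> U y -> U (op x y)).

Definition proper_subsemigroup (U : T -> Prop) : Prop :=
  is_subsemigroup U /\ exists x, ~ U x.

Definition union_of_proper (n : nat) : Prop :=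
  exists F : nat -> T -> Prop,
    (forall i, i < n -> proper_subsemigroup (F i)) /\
    (forall x, exists i, i < n /\ F i x).

Definition sigma_s_eq (n : nat) : Prop :=
  0 < n /\ union_of_proper n /\ (forall m, 0 < m -> m < n -> ~ union_of_proper m).

End Semigroup.

(* The complement of a maximal J-class J is closed under products: a product
   ab lies J-below both a and b, so if ab were in J, maximality of J would put
   a (and b) in J as well.  Hence S \ J and <J> are subsemigroups covering S;
   both are proper (the first misses J, the second misses some element by
   hypothesis), so sigma_s(S) <= 2, while a single proper subsemigroup can
   never cover S. *)
From Stdlib Require Import Arith Lia Classical.

Section Semigroup.
Variables (T : Type) (op : T -> T -> T).
Hypothesis assoc : forall x y z, op x (op y z) = op (op x y) z.

Lemma J_le_opl (a b : T) : J_le T op (op a b) a.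
Proof.
  intros z [H | [[c H] | [[d H] | [c [d H]]]]]; subst z.
  - right; right; left; exists b; reflexivity.
  - right; right; right; exists c, b; now rewrite assoc.
  - right; right; left; exists (op b d); now rewrite assoc.
  - right; right; right; exists c, (op b d); now rewrite <- !assoc.
Qed.

Lemma J_rel_refl (x : T) : J_rel T op x x.
Proof. split; intros z hz; exact hz. Qed.

Lemma maximal_J_class_compl_opl (J : T -> Prop) :
  maximal_J_class T op J -> forall a b, J (op a b) -> J a.
Proof.
  intros [x [HJ Hmax]] a b Hab.
  apply HJ in Hab as [_ Hx_ab].
  assert (Hxa : J_le T op x a).
  { intros z hz; apply (J_le_opl a b), Hx_ab, hz. }
  apply HJ; split; [apply Hmax |]; exact Hxa.
Qed.

Lemma generated_subsemigroup (A : T -> Prop) :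
  (exists x, A x) -> is_subsemigroup T op (generated T op A).
Proof.
  intros [x Ax]; split.
  - exists x; now constructor.
  - intros y z Hy Hz; now constructor.
Qed.

Lemma maximal_J_class_compl_subsemigroup (J : T -> Prop) :
  maximal_J_class T op J -> (exists s, ~ J s) ->
  is_subsemigroup T op (fun y => ~ J y).
Proof.
  intros hJ Hs; split; [exact Hs |].
  intros a b Ha _ Hab; exact (Ha (maximal_J_class_compl_opl J hJ a b Hab)).
Qed.

Lemma union_of_proper_2 (U V : T -> Prop) :
  proper_subsemigroup T op U -> proper_subsemigroup T op V ->
  (forall x, U x \/ V x) -> union_of_proper T op 2.
Proof.
  intros HU HV Hcov.
  exists (fun i => match i with 0 => U | _ => V end); split.
  - intros [| i] _; assumption.
  - intros x; destruct (Hcov x) as [Hx | Hx]; [exists 0 | exists 1]; split; auto.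
Qed.

Lemma not_union_of_proper_1 : ~ union_of_proper T op 1.
Proof.
  intros [F [HF Hcov]].
  destruct (HF 0 ltac:(lia)) as [_ [y Hy]].
  destruct (Hcov y) as [i [Hi HFy]].
  replace i with 0 in HFy by lia; exact (Hy HFy).
Qed.

End Semigroup.

Theorem mainTheorem7 (T : Type) (op : T -> T -> T)
  (assoc : forall x y z, op x (op y z) = op (op x y) z)
  (J : T -> Prop) (hJ : maximal_J_class T op J)
  (hgen : exists s, ~ generated T op J s) :
  sigma_s_eq T op 2.
Proof.
  destruct hgen as [s Hs].
  assert (Jx : exists x, J x).
  { destruct hJ as [x [HJ _]]; exists x; apply HJ, J_rel_refl. }
  assert (Js : ~ J s) by (intro h; apply Hs; now constructor).
  split; [lia | split].
  - apply (union_of_proper_2 T op (generated T op J) (fun y => ~ J y)).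
    + split; [apply generated_subsemigroup; exact Jx | now exists s].
    + split; [apply maximal_J_class_compl_subsemigroup; eauto |].
      destruct Jx as [x Jx]; exists x; intro h; exact (h Jx).
    + intros y; destruct (classic (J y)); [left; now constructor | now right].
  - intros m Hm Hm2; replace m with 1 by lia; apply not_union_of_proper_1.
Qed.
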